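(* Let $R$ be a partially colored tree (a trunk) in which every colored vertex is a leaf, with at most one colored vertex and with $|V(R)|\le 7$. Then Alice can win the $3$-Modified Coloring Game on $R$.
   Context: A partial coloring assigns to some vertices colors from a set of $3$ colors so that adjacent colored vertices get different colors; a color is legal for an uncolored vertex $v$ if no neighbor of $v$ has that color. The $k$-Modified Coloring Game ($k$-MCG) on a partially colored graph: Bob and Alice alternate turns, Bob first, each turn coloring an uncolored vertex with a legal color from a set of $k$ colors, except that Bob may choose to pass on any of his turns. Bob wins if at some point an uncolored vertex has no legal color; Alice wins if every vertex becomes colored. A trunk of a partially colored forest $F$ is a maximal connected subgraph of $F$ in which every colored vertex is a leaf. *)

From mathcomp Require Import all_boot.
Set Implicit Arguments. Unset Strict Implicit. Unset Printing Implicit Defensive.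

Definition simple_graph (T : finType) (e : rel T) : Prop :=
  symmetric e /\ irreflexive e.

Definition acyclic (T : finType) (e : rel T) : Prop :=
  forall p : seq T, uniq p -> 3 <= size p -> ~~ cycle e p.

Definition connected_graph (T : finType) (e : rel T) : Prop :=
  forall x y : T, connect e x y.

Definition is_tree (T : finType) (e : rel T) : Prop :=
  [/\ simple_graph e, connected_graph e & acyclic e].

Definition leaf (T : finType) (e : rel T) (v : T) : Prop :=
  #|[set y | e v y]| = 1.

(* Partial colorings with colors from 'I_k; None = uncolored. *)
Definition pcoloring (T : finType) (k : nat) := T -> option 'I_k.

Definition proper_pcoloring (T : finType) (e : rel T) k (c : pcoloring T k) : Prop :=
  forall x y a, e x y -> c x = Some a -> c y <> Some a.

Definition legal (T : finType) (e : rel T) k (c : pcoloring T k) (v : T) (a : 'I_k) : Prop :=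
  c v = None /\ forall u, e v u -> c u <> Some a.

Definition all_colored (T : finType) k (c : pcoloring T k) : Prop :=
  forall v, c v <> None.

Definition stuck (T : finType) (e : rel T) k (c : pcoloring T k) : Prop :=
  exists v, c v = None /\ forall a, ~ legal e c v a.

Definition recolor (T : finType) k (c : pcoloring T k) (v : T) (a : 'I_k) : pcoloring T k :=
  fun x => if x == v then Some a else c x.

(* AliceWinsBob c : Alice has a winning strategy
   from position c with Bob to move; AliceWinsAlice c : same with Alice to
   move.  Bob may pass; Alice may not.  Bob wins as soon as a position is
   stuck; Alice wins when every vertex is colored. *)
Inductive AliceWinsBob (T : finType) (e : rel T) (k : nat) : pcoloring T k -> Prop :=
| awb_done c : ~ stuck e c -> all_colored c -> AliceWinsBob e c
| awb_step c : ~ stuck e c -> ~ all_colored c ->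
    AliceWinsAlice e c ->
    (forall v a, legal e c v a -> AliceWinsAlice e (recolor c v a)) ->
    AliceWinsBob e c
with AliceWinsAlice (T : finType) (e : rel T) (k : nat) : pcoloring T k -> Prop :=
| awa_done c : ~ stuck e c -> all_colored c -> AliceWinsAlice e c
| awa_step c v a : ~ stuck e c -> legal e c v a ->
    AliceWinsBob e (recolor c v a) -> AliceWinsAlice e c.

Definition alice_wins_MCG (T : finType) (e : rel T) (k : nat) (c : pcoloring T k) : Prop :=
  AliceWinsBob e c.

From mathcomp Require Import all_boot zify.
Set Implicit Arguments. Unset Strict Implicit. Unset Printing Implicit Defensive.

(* A vertex is safe when it is colored, or when the colors it sees plus its
   uncolored neighbours number fewer than 3: a safe vertex never becomes
   uncolorable, whatever is played.  If all vertices are safe Alice just plays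
   legally, and if all but one vertex w are safe and w sees at most one color,
   Alice survives Bob's next move and then colors w.  An unsafe vertex has degree
   at least 3, and a graph of girth at least 5 on 7 vertices has at most two such
   vertices.  After Bob's first move at most two vertices are colored, and a
   case analysis on the (at most two) unsafe vertices, adjacent or not, gives
   Alice a move reaching one of the two good situations. *)

Section Game.

Variables (T : finType) (e : rel T) (k : nat).
Implicit Types (c : pcoloring T k) (u v w x : T) (a : 'I_k).

Definition nbrs v : {set T} := [set y | e v y].
Definition colored c : {set T} := [set v | c v != None].
Definition colored_nbrs c v : {set T} := nbrs v :&: colored c.
Definition uncolored_nbrs c v : {set T} := nbrs v :\: colored c.
Definition seen_colors c v : {set 'I_k} :=
  [set a | [exists x, e v x && (c x == Some a)]].

Definition safe c v : bool :=
  (v \in colored c) || (#|seen_colors c v| + #|uncolored_nbrs c v| < k).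

Lemma card_seen_colors c v : #|seen_colors c v| <= #|colored_nbrs c v|.
Proof.
rewrite -(card_imset _ Some_inj); apply: leq_trans (leq_imset_card c _).
apply/subset_leq_card/subsetP => _ /imsetP [a + ->].
rewrite inE => /existsP [x /andP [vx /eqP cx]].
by apply/imsetP; exists x; rewrite // !inE vx cx.
Qed.

Lemma card_colored_uncolored_nbrs c v :
  #|colored_nbrs c v| + #|uncolored_nbrs c v| = #|nbrs v|.
Proof. exact: cardsID. Qed.

Lemma unsafe_uncolored c v : ~~ safe c v -> c v = None.
Proof. by rewrite /safe inE negb_or negbK => /andP [/eqP]. Qed.

Lemma unsafe_deg c v : ~~ safe c v -> k <= #|nbrs v|.
Proof.
rewrite /safe negb_or -leqNgt => /andP [_ big].
by rewrite -(card_colored_uncolored_nbrs c) (leq_trans big) ?leq_add2r ?card_seen_colors.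
Qed.

Lemma legalP c v a : legal e c v a <-> c v = None /\ a \notin seen_colors c v.
Proof.
rewrite inE negb_exists; split=> [[cv notseen] | [cv /forallP notseen]].
  by split=> //; apply/forallP => x; apply/negP => /andP [vx /eqP /(notseen x vx)].
by split=> // x vx cx; move: (notseen x); rewrite vx cx eqxx.
Qed.

Lemma exists_color_notin (K : {set 'I_k}) : #|K| < k -> exists a, a \notin K.
Proof.
move=> small; have /card_gt0P [a] : 0 < #|~: K| by move: (cardsC K); rewrite card_ord; lia.
by rewrite inE; exists a.
Qed.

Lemma not_stuck c :
  (forall v, c v = None -> #|seen_colors c v| < k) -> ~ stuck e c.
Proof.
move=> few [v [cv nolegal]]; have [a notseen] := exists_color_notin (few v cv).
by apply: (nolegal a); apply/legalP.
Qed.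

Lemma safe_seen_colors c v : safe c v -> c v = None -> #|seen_colors c v| < k.
Proof.
rewrite /safe inE => /orP [/eqP // | small] _.
by apply: leq_ltn_trans small; rewrite leq_addr.
Qed.

Lemma colored_recolor c x a : colored (recolor c x a) = x |: colored c.
Proof. by apply/setP => y; rewrite !inE /recolor; case: (y == x). Qed.

Lemma uncolored_nbrs_recolor c x a v :
  uncolored_nbrs (recolor c x a) v = uncolored_nbrs c v :\ x.
Proof. by rewrite /uncolored_nbrs colored_recolor setDDl setUC. Qed.

Lemma seen_colors_recolor c x a v : seen_colors (recolor c x a) v \subset a |: seen_colors c v.
Proof.
apply/subsetP => b; rewrite !inE /recolor => /existsP [y /andP [vy]].
case: (y =P x) => [_ /eqP [->] | _ cy]; first by rewrite eqxx.
by apply/orP; right; apply/existsP; exists y; rewrite vy.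
Qed.

Lemma seen_colors_recolor_nonadj c x a v :
  ~~ e v x -> seen_colors (recolor c x a) v \subset seen_colors c v.
Proof.
move=> vNx; apply/subsetP => b; rewrite !inE /recolor => /existsP [y /andP [vy]].
case: (y =P x) => [yx | _ cy]; first by rewrite -yx vy in vNx.
by apply/existsP; exists y; rewrite vy.
Qed.

Lemma card_seen_colors_recolor c x a v :
  #|seen_colors (recolor c x a) v| <= #|seen_colors c v| + e v x.
Proof.
have [vx | vNx] := boolP (e v x).
  apply: leq_trans (subset_leq_card (seen_colors_recolor c x a v)) _.
  by rewrite cardsU1 addnC leq_add2l leq_b1.
by rewrite addn0; apply/subset_leq_card/seen_colors_recolor_nonadj.
Qed.

Lemma safe_recolor c x a v : c x = None -> safe c v -> safe (recolor c x a) v.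
Proof.
move=> cx; rewrite /safe colored_recolor in_setU1 uncolored_nbrs_recolor.
case: eqP => //= _ /orP [-> // | small]; apply/orP; right; apply: leq_ltn_trans small.
have := card_seen_colors_recolor c x a v.
by rewrite (cardsD1 x (uncolored_nbrs c v)) !inE cx eqxx /= addnA leq_add2r.
Qed.

Lemma card_uncolored_recolor c x a :
  c x = None -> #|~: colored (recolor c x a)| < #|~: colored c|.
Proof.
move=> cx; rewrite colored_recolor setCU (cardsD1 x (~: colored c)) !inE cx eqxx.
by rewrite add1n ltnS subset_leq_card // setIC -setDE.
Qed.

Lemma all_coloredP c : all_colored c \/ exists v, c v = None.
Proof.
case: (pickP (fun v => c v == None)) => [v /eqP cv | none]; first by right; exists v.
by left=> v cv; move: (none v); rewrite cv.
Qed.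

Lemma seen_colors_sub1 c v x a :
  colored_nbrs c v \subset [set x] -> c x = Some a -> seen_colors c v \subset [set a].
Proof.
move=> sub cx; apply/subsetP => b; rewrite inE => /existsP [y /andP [vy /eqP cy]].
have /(subsetP sub) : y \in colored_nbrs c v by rewrite !inE vy cy.
by rewrite inE => /eqP yx; move: cx; rewrite -yx cy => -[->]; rewrite inE.
Qed.

Lemma seen_colors_recolor_sub1 c x a v :
  seen_colors c v \subset [set a] -> seen_colors (recolor c x a) v \subset [set a].
Proof.
move=> sub; apply: subset_trans (seen_colors_recolor c x a v) _.
by rewrite subUset sub1set set11.
Qed.

Lemma alice_wins_bob_to_move c :
  ~ stuck e c -> AliceWinsAlice e c ->
  (forall v a, legal e c v a -> AliceWinsAlice e (recolor c v a)) ->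
  AliceWinsBob e c.
Proof.
move=> ns pass move; have [done | [v cv]] := all_coloredP c; first exact: awb_done.
by apply: awb_step => // all; apply: (all v).
Qed.

Lemma all_safe_alice_wins c :
  (forall v, safe c v) -> AliceWinsBob e c /\ AliceWinsAlice e c.
Proof.
have [n] := ubnP #|~: colored c|; elim: n c => // n IH c; rewrite ltnS => unc allsafe.
have ns : ~ stuck e c by apply: not_stuck => v; apply: safe_seen_colors.
have IHmove v a : legal e c v a ->
    AliceWinsBob e (recolor c v a) /\ AliceWinsAlice e (recolor c v a).
  move=> /legalP [cv _]; apply: IH => [|u]; last exact: safe_recolor.
  exact: leq_trans (card_uncolored_recolor a cv) unc.
have alice : AliceWinsAlice e c.
  have [done | [v cv]] := all_coloredP c; first exact: awa_done.
  have [a notseen] := exists_color_notin (safe_seen_colors (allsafe v) cv).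
  have lg : legal e c v a by apply/legalP.
  exact: awa_step ns lg (IHmove v a lg).1.
by split=> //; apply: alice_wins_bob_to_move => // v a /IHmove [].
Qed.

Lemma alice_wins_one_unsafe c w :
  (forall v, v != w -> safe c v) -> (c w = None -> #|seen_colors c w| < k) ->
  AliceWinsAlice e c.
Proof.
move=> safe_others wfree.
have ns : ~ stuck e c.
  apply: not_stuck => v cv; have [vw | vw] := eqVneq v w.
    by rewrite vw in cv *; apply: wfree.
  exact: safe_seen_colors (safe_others v vw) cv.
case cw: (c w) => [b|].
  apply: (all_safe_alice_wins _).2 => v; have [-> | /safe_others //] := eqVneq v w.
  by rewrite /safe inE cw.
have [a notseen] := exists_color_notin (wfree cw).
have lg : legal e c w a by apply/legalP.
apply: (awa_step ns lg); apply: (all_safe_alice_wins _).1 => v.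
have [-> | vw] := eqVneq v w; first by rewrite /safe colored_recolor setU11.
exact: safe_recolor (safe_others v vw).
Qed.

Lemma alice_wins_bob_one_unsafe c w :
  (forall v, v != w -> safe c v) -> (c w = None -> #|seen_colors c w|.+1 < k) ->
  AliceWinsBob e c.
Proof.
move=> safe_others wfree.
apply: alice_wins_bob_to_move => [|| v a /legalP [cv _]].
- apply: not_stuck => u cu; have [uw | uw] := eqVneq u w.
    by rewrite uw in cu *; apply: ltnW (wfree cu).
  exact: safe_seen_colors (safe_others u uw) cu.
- by apply: (alice_wins_one_unsafe safe_others) => /wfree /ltnW.
apply: (alice_wins_one_unsafe (w := w)) => [u uw | cw].
  exact: safe_recolor (safe_others u uw).
have vw : w != v by apply/eqP => wv; move: cw; rewrite wv /recolor eqxx.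
move: cw; rewrite /recolor (negbTE vw) => /wfree small.
apply: leq_ltn_trans (subset_leq_card (seen_colors_recolor c v a w)) _.
by rewrite cardsU1; case: (_ \notin _); rewrite ?add1n ?add0n // ltnW.
Qed.

Lemma alice_wins_by_move c x a w :
  ~ stuck e c -> legal e c x a ->
  (forall v, v != w -> safe (recolor c x a) v) ->
  #|seen_colors (recolor c x a) w|.+1 < k -> AliceWinsAlice e c.
Proof.
move=> ns lg safe_others few.
exact: awa_step ns lg (alice_wins_bob_one_unsafe safe_others (fun _ => few)).
Qed.

Lemma alice_wins_by_coloring c x a w :
  ~ stuck e c -> legal e c x a ->
  (forall v, v != x -> v != w -> safe c v) ->
  #|seen_colors (recolor c x a) w|.+1 < k -> AliceWinsAlice e c.
Proof.
move=> ns lg safe_others; apply: alice_wins_by_move => // v vw.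
have [-> | vx] := eqVneq v x; first by rewrite /safe colored_recolor setU11.
by have [cx _] := lg; apply: safe_recolor (safe_others v vx vw).
Qed.

Lemma alice_wins_by_free_move c x w :
  ~ stuck e c -> c x = None -> #|seen_colors c x| < k ->
  (forall v, v != x -> v != w -> safe c v) ->
  (#|colored_nbrs c w| + e w x).+1 < k -> AliceWinsAlice e c.
Proof.
move=> ns cx xfree safe_others few; have [a notseen] := exists_color_notin xfree.
have lg : legal e c x a by apply/legalP.
apply: (alice_wins_by_coloring ns lg safe_others); apply: leq_ltn_trans few.
by rewrite ltnS (leq_trans (card_seen_colors_recolor c x a w)) ?leq_add2r ?card_seen_colors.
Qed.

End Game.

Lemma cardsUU (T : finType) (A B C : {set T}) :
  #|A :|: B :|: C| + #|A :&: B| + #|A :&: C| + #|B :&: C| =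
  #|A| + #|B| + #|C| + #|A :&: B :&: C|.
Proof.
have := cardsUI (A :|: B) C; have := cardsUI A B; have := cardsUI (A :&: C) (B :&: C).
by rewrite setIUl setIACA setIid; lia.
Qed.

Section GirthFive.

Variables (T : finType) (e : rel T).

Definition triangle_free := forall x y z, e x y -> e y z -> e z x -> False.
Definition square_free :=
  forall x y z w, e x y -> e y z -> e z w -> e w x -> x != z -> y != w -> False.

Section Acyclic.

Hypotheses (e_irr : irreflexive e) (e_acyclic : acyclic e).

Let adj_neq x y : e x y -> x != y.
Proof. by apply: contraTneq => ->; rewrite e_irr. Qed.

Lemma acyclic_triangle_free : triangle_free.
Proof.
move=> x y z xy yz zx; apply: (negP (e_acyclic (p := [:: x; y; z]) _ _)) => //=.
  by rewrite !inE negb_or adj_neq // eq_sym adj_neq // adj_neq.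
by rewrite xy yz zx.
Qed.

Lemma acyclic_square_free : square_free.
Proof.
move=> x y z w xy yz zw wx xz yw.
apply: (negP (e_acyclic (p := [:: x; y; z; w]) _ _)) => //=.
  by rewrite !inE !negb_or adj_neq // xz eq_sym adj_neq // adj_neq // yw adj_neq.
by rewrite xy yz zw wx.
Qed.

End Acyclic.

Hypotheses (e_sym : symmetric e) (e_irr : irreflexive e).
Hypotheses (e_tri : triangle_free) (e_sq : square_free).

Lemma nbrsI_adj a b : e a b -> nbrs e a :&: nbrs e b = set0.
Proof.
move=> ab; apply/setP => z; rewrite !inE; apply/negbTE/negP => /andP [az bz].
by apply: (e_tri ab bz); rewrite e_sym.
Qed.

Lemma card_nbrsI a b : a != b -> #|nbrs e a :&: nbrs e b| <= 1.
Proof.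
move=> ab; apply/card_le1_eqP => z z'; rewrite !inE => /andP [az bz] /andP [az' bz'].
apply/eqP; apply: contraT => zz'.
by case: (e_sq az _ bz' _ ab); rewrite 1?eq_sym // e_sym.
Qed.

Definition closed_nbrs v := v |: nbrs e v.

Lemma card_closed_nbrs v : #|closed_nbrs v| = #|nbrs e v|.+1.
Proof. by rewrite cardsU1 inE e_irr. Qed.

Lemma card_closed_nbrsI a b : a != b -> #|closed_nbrs a :&: closed_nbrs b| <= (e a b).+1.
Proof.
move=> ab; have [adj | nadj] := boolP (e a b).
  have sub : closed_nbrs a :&: closed_nbrs b \subset [set a; b].
    apply/subsetP => z; rewrite !inE => /andP [/predU1P [-> | az] /predU1P [-> | bz]];
      rewrite ?eqxx ?orbT //.
    by case: (e_tri adj bz); rewrite e_sym.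
  by apply: leq_trans (subset_leq_card sub) _; rewrite cards2; case: (a != b).
apply: leq_trans _ (card_nbrsI ab); apply/subset_leq_card/subsetP => z.
rewrite !inE => /andP [/predU1P [za | az] /predU1P [zb | bz]].
- by rewrite -za zb eqxx in ab.
- by rewrite -za e_sym bz in nadj.
- by rewrite -zb az in nadj.
by rewrite az bz.
Qed.

Hypothesis small : #|T| <= 7.

Lemma no_three_big_vertices a b c :
  a != b -> a != c -> b != c ->
  3 <= #|nbrs e a| -> 3 <= #|nbrs e b| -> 3 <= #|nbrs e c| -> False.
Proof.
move=> ab ac bc da db dc.
(* The closed neighbourhoods, of size at least 4, would not fit into 7 vertices:
   pairwise they meet in at most 1 + [adjacent] vertices, and when two of the
   three pairs are adjacent the middle vertex lies in all three. *)
have triple :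
    e a b + e a c + e b c <= #|closed_nbrs a :&: closed_nbrs b :&: closed_nbrs c| + 1.
{ case eab: (e a b); case eac: (e a c); case ebc: (e b c) => //=; rewrite ?leq_addl //.
  - by case: (e_tri eab ebc); rewrite e_sym.
  all: suff /card_gt0P:
    exists x, x \in closed_nbrs a :&: closed_nbrs b :&: closed_nbrs c by lia.
  - by exists a; rewrite !inE eqxx (e_sym b) (e_sym c) eab eac !orbT.
  - by exists b; rewrite !inE eqxx (e_sym c) eab ebc !orbT.
  by exists c; rewrite !inE eqxx eac ebc !orbT. }
have := cardsUU (closed_nbrs a) (closed_nbrs b) (closed_nbrs c).
have := max_card (closed_nbrs a :|: closed_nbrs b :|: closed_nbrs c).
have := card_closed_nbrsI ab; have := card_closed_nbrsI ac; have := card_closed_nbrsI bc.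
rewrite !card_closed_nbrs; lia.
Qed.

Lemma adjacent_big_vertex_deg3 a b :
  e a b -> 3 <= #|nbrs e a| -> 3 <= #|nbrs e b| -> #|nbrs e a| = 3 \/ #|nbrs e b| = 3.
Proof.
move=> ab da db; have := cardsUI (nbrs e a) (nbrs e b).
rewrite nbrsI_adj // cards0 addn0; have := max_card (nbrs e a :|: nbrs e b); lia.
Qed.

End GirthFive.

Section Endgame.

Variables (T : finType) (e : rel T).
Hypotheses (e_sym : symmetric e) (e_irr : irreflexive e).
Hypotheses (e_tri : triangle_free e) (e_sq : square_free e) (small : #|T| <= 7).
Variable c : pcoloring T 3.
Hypothesis two_colored : #|colored c| <= 2.

Lemma card_colored_nbrs_le2 v : #|colored_nbrs e c v| <= 2.
Proof. exact/(leq_trans _ two_colored)/subset_leq_card/subsetIr. Qed.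

Lemma card_seen_colors_lt3 v : #|seen_colors e c v| < 3.
Proof.
by apply: leq_ltn_trans (card_seen_colors e c v) _; rewrite ltnS card_colored_nbrs_le2.
Qed.

Lemma two_colored_not_stuck : ~ stuck e c.
Proof. by apply: not_stuck => v _; apply: card_seen_colors_lt3. Qed.

Lemma alice_wins_adjacent_same_color w1 w2 x y col :
  e w1 w2 -> #|nbrs e w2| = 3 -> c w2 = None -> colored c = [set x; y] ->
  colored_nbrs e c w1 = [set x] -> colored_nbrs e c w2 = [set y] ->
  c x = Some col -> c y = Some col ->
  (forall v, v != w1 -> v != w2 -> safe e c v) -> AliceWinsAlice e c.
Proof.
move=> w12 deg2 cw2 colored_xy cn1 cn2 cx cy safe_others.
have /card_gt0P [z] : 0 < #|nbrs e w2 :\: [set w1; y]|.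
  rewrite cardsD deg2 subn_gt0 ltnS (leq_trans (subset_leq_card (subsetIr _ _))) //.
  by rewrite cards2; case: (_ != _).
rewrite !inE negb_or => /andP [/andP [zw1 zy] w2z].
have : z \notin colored_nbrs e c w2 by rewrite cn2 inE.
rewrite !inE w2z /= negbK => /eqP cz.
have w1x : e w1 x by move: (set11 x); rewrite -cn1 !inE => /andP [].
have w2y : e w2 y by move: (set11 y); rewrite -cn2 !inE => /andP [].
have xw2 : x != w2 by apply/eqP => xw; rewrite xw cw2 in cx.
have w1Nz : ~~ e w1 z by apply/negP => w1z; apply: (e_tri w1z (_ : e z w2)); rewrite e_sym.
have lg : legal e c z col.
  split=> // u zu cu; have : u \in colored c by rewrite inE cu.
  rewrite colored_xy !inE => /orP [] /eqP xu; rewrite {u}xu in zu cu.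
    by apply: (e_sq zu _ w12 w2z zw1 xw2); rewrite e_sym.
  by apply: (e_tri zu _ w2z); rewrite e_sym.
have seen1 : seen_colors e c w1 \subset [set col] by apply: seen_colors_sub1 cx; rewrite cn1.
have seen2 : seen_colors e c w2 \subset [set col] by apply: seen_colors_sub1 cy; rewrite cn2.
(* coloring [z] with [col] makes [w2] safe: it still sees only [col] and keeps one
   uncolored neighbour, [w1] *)
apply: (alice_wins_by_move (w := w1) two_colored_not_stuck lg) => [v vw1 |].
  have [-> | vz] := eqVneq v z; first by rewrite /safe colored_recolor setU11.
  have [-> | vw2] := eqVneq v w2; last exact: safe_recolor (safe_others v vw1 vw2).
  have seen2' := seen_colors_recolor_sub1 z seen2.
  have unc2 : #|uncolored_nbrs e c w2 :\ z| = 1.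
    have := card_colored_uncolored_nbrs e c w2.
    by rewrite cn2 cards1 deg2 (cardsD1 z) !inE w2z cz eqxx => -[].
  rewrite /safe uncolored_nbrs_recolor unc2 addn1 !ltnS; apply/orP; right.
  by rewrite (leq_trans (subset_leq_card seen2')) ?cards1.
have seen1' := subset_trans (seen_colors_recolor_nonadj c col w1Nz) seen1.
by rewrite !ltnS (leq_trans (subset_leq_card seen1')) ?cards1.
Qed.

Lemma alice_wins_adjacent_unsafe w1 w2 :
  e w1 w2 -> ~~ safe e c w1 -> ~~ safe e c w2 ->
  (forall v, v != w1 -> v != w2 -> safe e c v) -> AliceWinsAlice e c.
Proof.
move=> w12 uns1 uns2 safe_others.
have ns := two_colored_not_stuck; have cw1 := unsafe_uncolored uns1.
have cw2 := unsafe_uncolored uns2.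
have safe_others' v : v != w2 -> v != w1 -> safe e c v by move=> *; apply: safe_others.
have disj : colored_nbrs e c w1 :&: colored_nbrs e c w2 = set0.
  by apply/eqP; rewrite -subset0 -(nbrsI_adj e_sym e_tri w12) setISS ?subsetIl.
have sum : #|colored_nbrs e c w1| + #|colored_nbrs e c w2| <= 2.
  rewrite -cardsUI disj cards0 addn0; apply: leq_trans two_colored.
  by apply/subset_leq_card; rewrite subUset !subsetIr.
have [cn2_0 | cn2_pos] := posnP #|colored_nbrs e c w2|.
  apply: (alice_wins_by_free_move ns cw1 (card_seen_colors_lt3 w1) safe_others).
  by rewrite cn2_0 e_sym w12.
have [cn1_0 | cn1_pos] := posnP #|colored_nbrs e c w1|.
  apply: (alice_wins_by_free_move ns cw2 (card_seen_colors_lt3 w2) safe_others').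
  by rewrite cn1_0 w12.
have /cards1P [x cn1] : #|colored_nbrs e c w1| == 1 by apply/eqP; lia.
have /cards1P [y cn2] : #|colored_nbrs e c w2| == 1 by apply/eqP; lia.
have xcol : x \in colored c by move: (set11 x); rewrite -cn1 inE => /andP [].
have ycol : y \in colored c by move: (set11 y); rewrite -cn2 inE => /andP [].
have xy : x != y.
  by apply/eqP => xy; move: disj; rewrite cn1 cn2 xy setIid => /setP/(_ y); rewrite !inE eqxx.
have colored_xy : colored c = [set x; y].
  by apply/eqP; rewrite eq_sym eqEcard cards2 xy two_colored andbT subUset !sub1set xcol.
move: xcol ycol; rewrite !inE; case cx: (c x) => [col1|] // _; case cy: (c y) => [col2|] // _.
have [same | col12] := eqVneq col1 col2.
  rewrite -{}same in cy.
  have [d1 | d2] :=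
    adjacent_big_vertex_deg3 e_sym e_tri small w12 (unsafe_deg uns1) (unsafe_deg uns2).
    apply: (alice_wins_adjacent_same_color _ d1 cw1 _ cn2 cn1 cy cx safe_others').
      by rewrite e_sym.
    by rewrite colored_xy setUC.
  exact: (alice_wins_adjacent_same_color w12 d2 cw2 colored_xy cn1 cn2 cx cy safe_others).
have seen1 : seen_colors e c w1 \subset [set col1] by apply: seen_colors_sub1 cx; rewrite cn1.
have seen2 : seen_colors e c w2 \subset [set col2] by apply: seen_colors_sub1 cy; rewrite cn2.
have lg : legal e c w1 col2.
  apply/legalP; split=> //.
  by apply/negP => /(subsetP seen1); rewrite inE eq_sym (negbTE col12).
apply: (alice_wins_by_coloring ns lg safe_others).
have seen2' := seen_colors_recolor_sub1 w1 seen2.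
by rewrite !ltnS (leq_trans (subset_leq_card seen2')) ?cards1.
Qed.

Lemma alice_wins_nonadjacent_unsafe w1 w2 :
  w1 != w2 -> ~~ e w1 w2 -> ~~ safe e c w1 -> ~~ safe e c w2 ->
  (forall v, v != w1 -> v != w2 -> safe e c v) -> AliceWinsAlice e c.
Proof.
move=> w12 nadj uns1 uns2 safe_others.
have ns := two_colored_not_stuck.
have common : #|colored_nbrs e c w1 :&: colored_nbrs e c w2| <= 1.
  by apply: leq_trans (card_nbrsI e_sym e_sq w12); rewrite subset_leq_card // setISS ?subsetIl.
have sum : #|colored_nbrs e c w1| + #|colored_nbrs e c w2| <= 3.
  rewrite -cardsUI; apply: (leq_add (_ : _ <= 2) common); apply: leq_trans two_colored.
  by apply/subset_leq_card; rewrite subUset !subsetIr.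
have [cn1 | cn2] : #|colored_nbrs e c w1| <= 1 \/ #|colored_nbrs e c w2| <= 1 by lia.
  have lt3 := card_seen_colors_lt3 w2.
  apply: (alice_wins_by_free_move (w := w1) ns (unsafe_uncolored uns2) lt3).
    by move=> v vw2 vw1; apply: safe_others.
  by rewrite (negbTE nadj) addn0 ltnS.
have lt3 := card_seen_colors_lt3 w1.
apply: (alice_wins_by_free_move ns (unsafe_uncolored uns1) lt3 safe_others).
by rewrite e_sym (negbTE nadj) addn0 ltnS.
Qed.

Lemma alice_wins_two_colored : AliceWinsAlice e c.
Proof.
have [none_unsafe | [w1]] := set_0Vmem [set v | ~~ safe e c v].
  apply: (all_safe_alice_wins _).2 => v; apply: contraT => uns.
  by have := in_set0 v; rewrite -none_unsafe inE uns.
rewrite inE => uns1.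
have [one_unsafe | [w2]] := set_0Vmem ([set v | ~~ safe e c v] :\ w1).
  apply: (alice_wins_one_unsafe (w := w1)) => [v vw1 | _]; last exact: card_seen_colors_lt3.
  by apply: contraT => uns; have := in_set0 v; rewrite -one_unsafe !inE vw1 uns.
rewrite !inE eq_sym => /andP [w12 uns2].
have safe_others v : v != w1 -> v != w2 -> safe e c v.
  move=> vw1 vw2; apply: contraT => /unsafe_deg uns.
  by case: (no_three_big_vertices e_sym e_irr e_tri e_sq small vw1 vw2 w12
    uns (unsafe_deg uns1) (unsafe_deg uns2)).
have [adj | nadj] := boolP (e w1 w2).
  exact: alice_wins_adjacent_unsafe adj uns1 uns2 safe_others.
exact: alice_wins_nonadjacent_unsafe w12 nadj uns1 uns2 safe_others.
Qed.

End Endgame.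

Theorem lemma5p4 (T : finType) (e : rel T) (c : pcoloring T 3) :
  is_tree e ->
  proper_pcoloring e c ->
  (forall v, c v <> None -> leaf e v) ->
  #|[set v | c v != None]| <= 1 ->
  #|T| <= 7 ->
  alice_wins_MCG e c.
Proof.
move=> [[e_sym e_irr] _ e_acyclic] _ _ one_colored small.
have e_tri := acyclic_triangle_free e_irr e_acyclic.
have e_sq := acyclic_square_free e_irr e_acyclic.
have two_colored : #|colored c| <= 2 by apply: leq_trans one_colored _.
apply: alice_wins_bob_to_move (two_colored_not_stuck two_colored) _ _.
  exact: alice_wins_two_colored.
move=> v a _; apply: alice_wins_two_colored => //.
by rewrite colored_recolor cardsU1 (leq_add (leq_b1 _) one_colored).
Qed.
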